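(* Let $\sigma_0,\sigma_\epsilon>0$ with $\sigma_0\neq\sigma_\epsilon$, $\theta_0\in\mathbb{R}$, prior $\Theta\sim\mathrm{Laplace}(\theta_0,\sigma_0)$, signal $X=\Theta+\epsilon$ with $\epsilon\sim\mathrm{Laplace}(0,\sigma_\epsilon)$ independent of $\Theta$, and let $\theta_1(x)=\mathbb{E}[\Theta\mid X=x]$. Then the DeGroot coefficient $\omega=\frac{d\theta_1}{dx}\big|_{x=\theta_0}$ is $$\omega=\frac{\sigma_0}{\sigma_0+\sigma_\epsilon}.$$
   Context: $\mathrm{Laplace}(\mu,s)$ has density $t\mapsto\frac{1}{2s}e^{-|t-\mu|/s}$. The posterior mean is $\theta_1(x)=\frac{\int\theta f_\Theta(\theta)l_\epsilon(x-\theta)d\theta}{\int f_\Theta(\theta)l_\epsilon(x-\theta)d\theta}$. *)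

From Stdlib Require Import Reals.
From Coquelicot Require Import Coquelicot.
Open Scope R_scope.

Definition laplace_pdf (mu s : R) (t : R) : R :=
  / (2 * s) * exp (- Rabs (t - mu) / s).

Definition integral_R (f : R -> R) : R :=
  RInt_gen f (Rbar_locally m_infty) (Rbar_locally p_infty).

(* Posterior mean E[Theta | X = x] for prior Theta ~ Laplace(theta0, s0)
   and X = Theta + eps, eps ~ Laplace(0, se) independent of Theta:
   theta1(x) = (int theta f(theta) l(x-theta)) / (int f(theta) l(x-theta)). *)
Definition posterior_mean (theta0 s0 se : R) (x : R) : R :=
  integral_R (fun th => th * laplace_pdf theta0 s0 th * laplace_pdf 0 se (x - th))
  / integral_R (fun th => laplace_pdf theta0 s0 th * laplace_pdf 0 se (x - th)).

From Stdlib Require Import Reals Lra.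
From Coquelicot Require Import Coquelicot.
Open Scope R_scope.

(* With a = 1/s0 and b = 1/se, the joint density of (Theta, X) at (t, x) is, up to a
   constant, exp (-a |t - theta0| - b |t - x|).  Between and beyond the two kinks this is
   an exponential, so both integrals defining the posterior mean have closed forms (the
   middle exponent b - a is nonzero because s0 <> se).  The closed form is a different
   smooth expression for x >= theta0 and for x <= theta0, but both branches have
   derivative b / (a + b) = s0 / (s0 + se) at x = theta0, which is therefore the
   derivative of the posterior mean. *)

Lemma is_derive_glue (f g h : R -> R) (x0 l : R) :
  (forall x, x0 <= x -> f x = g x) -> (forall x, x <= x0 -> f x = h x) ->
  is_derive g x0 l -> is_derive h x0 l -> is_derive f x0 l.
Proof.
  intros Hg Hh Dg Dh. apply is_derive_Reals. apply is_derive_Reals in Dg, Dh.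
  intros eps Heps.
  destruct (Dg eps Heps) as [dg Hdg]. destruct (Dh eps Heps) as [dh Hdh].
  exists (mkposreal _ (Rmin_pos _ _ (cond_pos dg) (cond_pos dh))). simpl.
  intros k Hk0 Hk.
  destruct (Rle_dec 0 k) as [Hk1 | Hk1].
  - rewrite (Hg (x0 + k)), (Hg x0) by lra.
    apply Hdg; [exact Hk0 | apply Rlt_le_trans with (1 := Hk), Rmin_l].
  - rewrite (Hh (x0 + k)), (Hh x0) by lra.
    apply Hdh; [exact Hk0 | apply Rlt_le_trans with (1 := Hk), Rmin_r].
Qed.

Lemma filterlim_at_point (f : R -> R) (u : R) : filterlim f (at_point u) (locally (f u)).
Proof. intros P HP. exact (locally_singleton _ _ HP). Qed.

Lemma is_RInt_gen_primitive {Fa Fb : (R -> Prop) -> Prop} {FFa : Filter Fa} {FFb : Filter Fb}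
  (f F : R -> R) (la lb : R) :
  (forall x, is_derive F x (f x)) -> (forall x, continuous f x) ->
  filterlim F Fa (locally la) -> filterlim F Fb (locally lb) ->
  is_RInt_gen f Fa Fb (lb - la).
Proof.
  intros dF cf HFa HFb.
  assert (DF : forall x, Derive F x = f x) by (intros x; apply is_derive_unique, dF).
  apply is_RInt_gen_ext with (Derive F).
  { apply filter_forall. intros _ x _. apply DF. }
  apply is_RInt_gen_Derive; [ | | exact HFa | exact HFb].
  - apply filter_forall. intros _ x _. eexists. apply dF.
  - apply filter_forall. intros _ x _.
    apply continuous_ext with f; [intros y; symmetry; apply DF | apply cf].
Qed.

Lemma is_RInt_gen_scal_ext {Fa Fb : (R -> Prop) -> Prop} {FFa : Filter Fa} {FFb : Filter Fb}
  (f g : R -> R) (c l : R) :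
  filter_prod Fa Fb (fun ab => forall x,
    Rmin (fst ab) (snd ab) < x < Rmax (fst ab) (snd ab) -> g x = c * f x) ->
  is_RInt_gen f Fa Fb l -> is_RInt_gen g Fa Fb (c * l).
Proof.
  intros Hfg Hf. apply is_RInt_gen_ext with (fun x => scal c (f x)).
  - revert Hfg. apply filter_imp. intros ab H x Hx. symmetry. exact (H x Hx).
  - exact (is_RInt_gen_scal _ _ _ Hf).
Qed.

Lemma is_lim_affine_mul_exp (c0 c1 : R) : is_lim (fun s => (c0 + c1 * s) * exp s) m_infty 0.
Proof.
  apply is_lim_ext with (fun s => c0 * exp s + c1 * (s * exp s)); [intros s; ring |].
  replace 0 with (0 + 0) by ring. apply is_lim_plus'.
  - replace (Finite 0) with (Rbar_mult c0 0) by (simpl; f_equal; ring).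
    apply is_lim_scal_l, is_lim_exp_m.
  - replace (Finite 0) with (Rbar_mult c1 0) by (simpl; f_equal; ring).
    apply is_lim_scal_l, is_lim_mul_exp_m.
Qed.

Section AffineExp.

Variables (la A B u : R).
Hypothesis la_neq0 : la <> 0.

Definition affine_exp (t : R) : R := (A + B * t) * exp (la * (t - u)).

Definition affine_exp_coef (t : R) : R := (A + B * t) / la - B / la ^ 2.

Definition affine_exp_primitive (t : R) : R := exp (la * (t - u)) * affine_exp_coef t.

Lemma is_derive_affine_exp_primitive (t : R) :
  is_derive affine_exp_primitive t (affine_exp t).
Proof.
  unfold affine_exp_primitive, affine_exp_coef, affine_exp.
  auto_derive; [exact I | unfold Rminus; field; exact la_neq0].
Qed.

Lemma continuous_affine_exp (t : R) : continuous affine_exp t.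
Proof. apply (ex_derive_continuous affine_exp). unfold affine_exp. auto_derive. exact I. Qed.

Lemma affine_exp_primitive_base : affine_exp_primitive u = affine_exp_coef u.
Proof. unfold affine_exp_primitive. rewrite Rminus_diag, Rmult_0_r, exp_0. ring. Qed.

(* In the variable s = la (t - u) the primitive is exp s times an affine function of s. *)
Lemma filterlim_affine_exp_primitive (F : (R -> Prop) -> Prop) {FF : Filter F} :
  filterlim (fun t => la * (t - u)) F (Rbar_locally m_infty) ->
  filterlim affine_exp_primitive F (locally 0).
Proof.
  intros Hs.
  set (c0 := affine_exp_coef u). set (c1 := B / la ^ 2).
  apply filterlim_ext with (fun t => (fun s => (c0 + c1 * s) * exp s) (la * (t - u))).
  { intros t. cbv beta. unfold c0, c1, affine_exp_primitive, affine_exp_coef.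
    field. exact la_neq0. }
  exact (filterlim_comp _ _ _ _ _ F _ _ Hs (is_lim_affine_mul_exp c0 c1)).
Qed.

Lemma is_RInt_affine_exp (v : R) :
  is_RInt affine_exp u v (exp (la * (v - u)) * affine_exp_coef v - affine_exp_coef u).
Proof.
  rewrite <- affine_exp_primitive_base.
  apply (is_RInt_derive affine_exp_primitive).
  - intros x _. apply is_derive_affine_exp_primitive.
  - intros x _. apply continuous_affine_exp.
Qed.

End AffineExp.

Lemma is_RInt_gen_affine_exp_left (la A B u : R) : 0 < la ->
  is_RInt_gen (affine_exp la A B u) (Rbar_locally m_infty) (at_point u) (affine_exp_coef la A B u).
Proof.
  intros Hla. assert (la <> 0) by lra.
  rewrite <- affine_exp_primitive_base, <- (Rminus_0_r (affine_exp_primitive la A B u u)).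
  apply is_RInt_gen_primitive with (F := affine_exp_primitive la A B u).
  - apply is_derive_affine_exp_primitive; assumption.
  - apply continuous_affine_exp.
  - apply filterlim_affine_exp_primitive; [assumption | exact _ |].
    intros P [M HM]. exists (u + M / la). intros t Ht. apply HM.
    apply Rlt_le_trans with (la * (M / la)); [nra | right; field; lra].
  - apply filterlim_at_point.
Qed.

Lemma is_RInt_gen_affine_exp_right (la A B u : R) : la < 0 ->
  is_RInt_gen (affine_exp la A B u) (at_point u) (Rbar_locally p_infty) (- affine_exp_coef la A B u).
Proof.
  intros Hla. assert (la <> 0) by lra.
  rewrite <- affine_exp_primitive_base, <- Rminus_0_l.
  apply is_RInt_gen_primitive with (F := affine_exp_primitive la A B u).
  - apply is_derive_affine_exp_primitive; assumption.
  - apply continuous_affine_exp.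
  - apply filterlim_at_point.
  - apply filterlim_affine_exp_primitive; [assumption | exact _ |].
    intros P [M HM]. exists (u + M / la). intros t Ht. apply HM.
    apply Rlt_le_trans with (la * (M / la)); [nra | right; field; lra].
Qed.

Definition laplace_kernel (a b p q t : R) : R :=
  exp (- (a * Rabs (t - p)) - b * Rabs (t - q)).

Definition kernel_moment (a b p q A B : R) : R :=
  exp (- (b * (q - p))) *
    (affine_exp_coef (a + b) A B p
     + (exp ((b - a) * (q - p)) * affine_exp_coef (b - a) A B q
        - affine_exp_coef (b - a) A B p))
  - exp (- (a * (q - p))) * affine_exp_coef (- (a + b)) A B q.

Definition kernel_mean (a b p q : R) : R :=
  kernel_moment a b p q 0 1 / kernel_moment a b p q 1 0.

Lemma laplace_kernel_comm (a b p q t : R) : laplace_kernel a b p q t = laplace_kernel b a q p t.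
Proof. unfold laplace_kernel. f_equal. ring. Qed.

Lemma affine_mul_laplace_kernel (a b p q A B la u c t : R) :
  - (a * Rabs (t - p)) - b * Rabs (t - q) = c + la * (t - u) ->
  (A + B * t) * laplace_kernel a b p q t = exp c * affine_exp la A B u t.
Proof. intros E. unfold laplace_kernel, affine_exp. rewrite E, exp_plus. ring. Qed.

Lemma is_RInt_gen_kernel_moment (a b p q A B : R) : 0 < a -> 0 < b -> a <> b -> p <= q ->
  is_RInt_gen (fun t => (A + B * t) * laplace_kernel a b p q t)
    (Rbar_locally m_infty) (Rbar_locally p_infty) (kernel_moment a b p q A B).
Proof.
  intros Ha Hb Hab Hpq.
  set (g := fun t => (A + B * t) * laplace_kernel a b p q t).
  assert (Hl : is_RInt_gen g (Rbar_locally m_infty) (at_point p)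
                 (exp (- (b * (q - p))) * affine_exp_coef (a + b) A B p)).
  { apply is_RInt_gen_scal_ext with (affine_exp (a + b) A B p).
    2: apply is_RInt_gen_affine_exp_left; lra.
    exists (fun x => x < p) (fun y => y = p); [exists p; auto | reflexivity |].
    intros x y Hx Hy t Ht; simpl in Ht; subst y.
    rewrite Rmin_left, Rmax_right in Ht by lra.
    unfold g. apply affine_mul_laplace_kernel.
    rewrite (Rabs_left (t - p)), (Rabs_left (t - q)) by lra.
    ring. }
  assert (Hm : is_RInt_gen g (at_point p) (at_point q)
                 (exp (- (b * (q - p))) *
                    (exp ((b - a) * (q - p)) * affine_exp_coef (b - a) A B q
                     - affine_exp_coef (b - a) A B p))).
  { apply is_RInt_gen_scal_ext with (affine_exp (b - a) A B p).
    2: apply is_RInt_gen_at_point, is_RInt_affine_exp; lra.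
    exists (fun x => x = p) (fun y => y = q); [reflexivity | reflexivity |].
    intros x y Hx Hy t Ht; simpl in Ht; subst x y.
    rewrite Rmin_left, Rmax_right in Ht by lra.
    unfold g. apply affine_mul_laplace_kernel.
    rewrite (Rabs_right (t - p)), (Rabs_left (t - q)) by lra.
    ring. }
  assert (Hr : is_RInt_gen g (at_point q) (Rbar_locally p_infty)
                 (exp (- (a * (q - p))) * - affine_exp_coef (- (a + b)) A B q)).
  { apply is_RInt_gen_scal_ext with (affine_exp (- (a + b)) A B q).
    2: apply is_RInt_gen_affine_exp_right; lra.
    exists (fun x => x = q) (fun y => y > q); [reflexivity | exists q; auto |].
    intros x y Hx Hy t Ht; simpl in Ht; subst x.
    rewrite Rmin_left, Rmax_right in Ht by lra.
    unfold g. apply affine_mul_laplace_kernel.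
    rewrite (Rabs_right (t - p)), (Rabs_right (t - q)) by lra.
    ring. }
  replace (kernel_moment a b p q A B) with (plus (plus
    (exp (- (b * (q - p))) * affine_exp_coef (a + b) A B p)
    (exp (- (b * (q - p))) *
       (exp ((b - a) * (q - p)) * affine_exp_coef (b - a) A B q - affine_exp_coef (b - a) A B p)))
    (exp (- (a * (q - p))) * - affine_exp_coef (- (a + b)) A B q)).
  - exact (is_RInt_gen_Chasles _ _ _ _ (is_RInt_gen_Chasles _ _ _ _ Hl Hm) Hr).
  - unfold kernel_moment, plus. simpl. ring.
Qed.

(* At the diagonal p = q the normalising moment kernel_moment a b p p 1 0 equals 2 / (a + b). *)
Local Ltac derive_kernel_mean_at_diagonal a b :=
  unfold kernel_mean, kernel_moment, affine_exp_coef;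
  auto_derive; rewrite !Rplus_opp_r, ?Rmult_0_r, ?Ropp_0, !exp_0;
  [ match goal with |- ?e <> 0 => replace e with (2 / (a + b)) by (field; lra) end;
    apply Rgt_not_eq, Rdiv_lt_0_compat; lra
  | field; split; [lra | split; [lra |]];
    match goal with |- ?e <> 0 => replace e with (2 * (a + b) ^ 3 * (b - a) ^ 2) by ring end;
    repeat apply Rmult_integral_contrapositive_currified; try apply pow_nonzero; lra ].

Lemma is_derive_kernel_mean_right (a b p : R) : 0 < a -> 0 < b -> a <> b ->
  is_derive (kernel_mean a b p) p (b / (a + b)).
Proof. intros Ha Hb Hab. derive_kernel_mean_at_diagonal a b. Qed.

Lemma is_derive_kernel_mean_left (a b q : R) : 0 < a -> 0 < b -> a <> b ->
  is_derive (fun p => kernel_mean a b p q) q (a / (a + b)).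
Proof. intros Ha Hb Hab. derive_kernel_mean_at_diagonal a b. Qed.

Lemma laplace_pdf_mul (theta0 s0 se x t : R) :
  laplace_pdf theta0 s0 t * laplace_pdf 0 se (x - t)
  = / (2 * s0) * / (2 * se) * laplace_kernel (/ s0) (/ se) theta0 x t.
Proof.
  unfold laplace_pdf, laplace_kernel.
  replace (x - t - 0) with (- (t - x)) by ring. rewrite Rabs_Ropp.
  replace (- (/ s0 * Rabs (t - theta0)) - / se * Rabs (t - x))
    with (- Rabs (t - theta0) / s0 + - Rabs (t - x) / se) by (unfold Rdiv; ring).
  rewrite exp_plus. ring.
Qed.

Lemma posterior_mean_kernel_mean (theta0 s0 se x a b p q K : R) :
  K <> 0 -> 0 < a -> 0 < b -> a <> b -> p <= q ->
  (forall t, laplace_pdf theta0 s0 t * laplace_pdf 0 se (x - t) = K * laplace_kernel a b p q t) ->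
  posterior_mean theta0 s0 se x = kernel_mean a b p q.
Proof.
  intros HK Ha Hb Hab Hpq Hpdf.
  unfold posterior_mean, integral_R, kernel_mean.
  rewrite (is_RInt_gen_unique _ (K * kernel_moment a b p q 0 1)).
  2:{ apply is_RInt_gen_scal_ext with (fun t => (0 + 1 * t) * laplace_kernel a b p q t).
      - apply filter_forall. intros _ t _. rewrite Rmult_assoc, Hpdf. ring.
      - apply is_RInt_gen_kernel_moment; assumption. }
  rewrite (is_RInt_gen_unique _ (K * kernel_moment a b p q 1 0)).
  2:{ apply is_RInt_gen_scal_ext with (fun t => (1 + 0 * t) * laplace_kernel a b p q t).
      - apply filter_forall. intros _ t _. rewrite Hpdf. ring.
      - apply is_RInt_gen_kernel_moment; assumption. }
  unfold Rdiv. rewrite Rinv_mult.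
  transitivity (K * / K * (kernel_moment a b p q 0 1 * / kernel_moment a b p q 1 0)); [ring |].
  rewrite Rinv_r by exact HK. ring.
Qed.

Theorem mainTheorem12 (s0 se theta0 : R) :
  0 < s0 -> 0 < se -> s0 <> se ->
  is_derive (posterior_mean theta0 s0 se) theta0 (s0 / (s0 + se)).
Proof.
  intros Hs0 Hse Hne.
  assert (Ha : 0 < / s0) by (apply Rinv_0_lt_compat; exact Hs0).
  assert (Hb : 0 < / se) by (apply Rinv_0_lt_compat; exact Hse).
  assert (Hab : / s0 <> / se) by (intros E; apply Hne, Rinv_eq_reg, E).
  assert (HK : / (2 * s0) * / (2 * se) <> 0)
    by (apply Rmult_integral_contrapositive_currified; apply Rinv_neq_0_compat; lra).
  apply is_derive_glue with (g := kernel_mean (/ s0) (/ se) theta0)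
                            (h := fun p => kernel_mean (/ se) (/ s0) p theta0).
  - intros x Hx. apply posterior_mean_kernel_mean with (K := / (2 * s0) * / (2 * se)); auto.
    intros t. apply laplace_pdf_mul.
  - intros x Hx. apply posterior_mean_kernel_mean with (K := / (2 * s0) * / (2 * se)); auto.
    intros t. rewrite laplace_pdf_mul, laplace_kernel_comm. reflexivity.
  - replace (s0 / (s0 + se)) with (/ se / (/ s0 + / se)) by (field; lra).
    apply is_derive_kernel_mean_right; assumption.
  - replace (s0 / (s0 + se)) with (/ se / (/ se + / s0)) by (field; lra).
    apply is_derive_kernel_mean_left; auto.
Qed.
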